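(* Let $\mathcal{V}$ be a variety of groups and $m\ge 0$ such that the relatively free group $F_{m+1}(\mathcal{V})$ is infinite. Then the subgroup of $F_{m+1}(\mathcal{V})$ generated by $m$ of the $m+1$ free generators (which is naturally isomorphic to $F_m(\mathcal{V})$) has infinite index in $F_{m+1}(\mathcal{V})$.
   Context: For a variety $\mathcal{V}$ and cardinal $k$, $F_k(\mathcal{V})$ is the $\mathcal{V}$-free group of rank $k$, i.e., $F_k/V(F_k)$ where $F_k$ is the absolutely free group of rank $k$ and $V(F_k)$ its verbal subgroup for $\mathcal{V}$. *)

From mathcomp Require Import all_boot.
Set Implicit Arguments. Unset Strict Implicit. Unset Printing Implicit Defensive.

(* Group words (terms of the signature of groups) over a set X of variables.
   The absolutely free group F(X) is gword X modulo the group axioms. *)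
Inductive gword (X : Type) : Type :=
| gvar : X -> gword X
| gone : gword X
| gmul : gword X -> gword X -> gword X
| ginv : gword X -> gword X.
Arguments gone {X}.

Fixpoint gsubst (X Y : Type) (s : X -> gword Y) (w : gword X) : gword Y :=
  match w with
  | gvar x => s x
  | gone => gone
  | gmul u v => gmul (gsubst s u) (gsubst s v)
  | ginv u => ginv (gsubst s u)
  end.

Fixpoint gvars_in (X : Type) (P : X -> Prop) (w : gword X) : Prop :=
  match w with
  | gvar x => P x
  | gone => True
  | gmul u v => gvars_in P u /\ gvars_in P v
  | ginv u => gvars_in P u
  end.

(* A variety of groups is given by a set of laws, i.e. words in countably many
   variables x_0, x_1, ... *)
Definition variety := gword nat -> Prop.

(* veq V u v : u and v represent the same element of F_X / V(F_X), i.e. the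
   smallest congruence containing the group axioms and all values w(s) = 1
   of laws w of V (the verbal subgroup V(F_X)). *)
Inductive veq (V : variety) (X : Type) : gword X -> gword X -> Prop :=
| veq_refl u : veq V u u
| veq_sym u v : veq V u v -> veq V v u
| veq_trans u v w : veq V u v -> veq V v w -> veq V u w
| veq_mul u u' v v' : veq V u u' -> veq V v v' -> veq V (gmul u v) (gmul u' v')
| veq_inv u u' : veq V u u' -> veq V (ginv u) (ginv u')
| veq_assoc u v w : veq V (gmul (gmul u v) w) (gmul u (gmul v w))
| veq_mul1l u : veq V (gmul gone u) u
| veq_mul1r u : veq V (gmul u gone) u
| veq_mulVl u : veq V (gmul (ginv u) u) gone
| veq_mulVr u : veq V (gmul u (ginv u)) gone
| veq_law (w : gword nat) (s : nat -> gword X) : V w -> veq V (gsubst s w) gone.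

(* The V-free group of rank k, F_k(V), is gword 'I_k modulo veq V;
   its free generators are the gvar i, i : 'I_k. *)

Definition relfree_infinite (V : variety) (k : nat) : Prop :=
  ~ exists (n : nat) (r : 'I_n -> gword 'I_k),
      forall x : gword 'I_k, exists i : 'I_n, veq V x (r i).

Definition in_gen_subgroup (V : variety) (k : nat) (P : 'I_k -> Prop)
    (x : gword 'I_k) : Prop :=
  exists h : gword 'I_k, gvars_in P h /\ veq V x h.

Definition infinite_index_gen (V : variety) (k : nat) (P : 'I_k -> Prop) : Prop :=
  ~ exists (n : nat) (r : 'I_n -> gword 'I_k),
      forall x : gword 'I_k, exists (i : 'I_n) (h : gword 'I_k),
        in_gen_subgroup V P h /\ veq V x (gmul (r i) h).

(* If H = <x_i : i <> j> had finite index, write x = r h with r from a finite set;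
   the retraction killing x_j fixes h, so x * (x with x_j := 1)^-1 takes only
   finitely many values.  Permuting the generators, the same holds for each x_k, and
   composing the m+1 retractions shows that every element equals one of finitely many
   products times the image of x under the trivial substitution, which is 1: so
   F_(m+1)(V) would be finite. *)
From mathcomp Require Import all_boot fingroup perm.
Set Implicit Arguments. Unset Strict Implicit. Unset Printing Implicit Defensive.

Lemma gsubst_comp (X Y Z : Type) (s : Y -> gword Z) (t : X -> gword Y) w :
  gsubst s (gsubst t w) = gsubst (fun x => gsubst s (t x)) w.
Proof. by elim: w => [x| |u /= -> v ->|u /= ->]. Qed.

Lemma eq_gsubst (X Y : Type) (s t : X -> gword Y) w :
  s =1 t -> gsubst s w = gsubst t w.
Proof. by move=> est; elim: w => [x| |u /= -> v ->|u /= ->] //=; apply: est. Qed.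

Lemma gsubst_var (X : Type) (w : gword X) : gsubst (@gvar X) w = w.
Proof. by elim: w => [x| |u /= -> v ->|u /= ->]. Qed.

Lemma gsubst_id_in (X : Type) (P : X -> Prop) (s : X -> gword X) w :
  (forall x, P x -> s x = gvar x) -> gvars_in P w -> gsubst s w = w.
Proof.
move=> sP; elim: w => [x|//|u IHu v IHv [Pu Pv]|u IHu Pu] /=; first exact: sP.
  by rewrite IHu // IHv.
by rewrite IHu.
Qed.

Definition kill (X : Type) (P : pred X) (i : X) : gword X := if P i then gone else gvar i.

Lemma gsubst_killU (X : Type) (P Q : pred X) w :
  gsubst (kill Q) (gsubst (kill P) w) = gsubst (kill (predU P Q)) w.
Proof. by rewrite gsubst_comp; apply: eq_gsubst => i; rewrite /kill /=; case: (P i). Qed.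

Section Variety.
Variable V : variety.

Lemma veq_gsubst (X Y : Type) (s : X -> gword Y) u v :
  veq V u v -> veq V (gsubst s u) (gsubst s v).
Proof.
elim=> /=; try by econstructor; eauto.
by move=> w t Vw; rewrite gsubst_comp; apply: veq_law.
Qed.

Lemma veq_mulKg (X : Type) (a b : gword X) :
  veq V (gmul (ginv a) (gmul a b)) b.
Proof.
apply: veq_trans (veq_sym (veq_assoc V _ _ _)) _.
apply: veq_trans (veq_mul1l V b).
exact: veq_mul (veq_mulVl V a) (veq_refl V b).
Qed.

Lemma veq_gsubst1 (X Y : Type) (w : gword X) :
  veq V (gsubst (fun _ => gone : gword Y) w) gone.
Proof.
elim: w => /= [x||u IHu v IHv|u IHu]; try exact: veq_refl.
  exact: veq_trans (veq_mul IHu IHv) (veq_mul1l V _).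
apply: veq_trans (veq_inv IHu) _.
exact: veq_trans (veq_sym (veq_mul1r V _)) (veq_mulVl V _).
Qed.

Definition fin_cover (X : Type) (f : gword X -> gword X) :=
  exists (I : finType) (a : I -> gword X), forall x, exists i, veq V x (gmul (a i) (f x)).

Lemma fin_cover_comp (X : Type) (f g : gword X -> gword X) :
  fin_cover f -> fin_cover g -> fin_cover (g \o f).
Proof.
move=> [I [a cov_f]] [J [b cov_g]].
exists (I * J)%type, (fun ij => gmul (a ij.1) (b ij.2)) => x.
have [i xa] := cov_f x; have [j fxb] := cov_g (f x).
exists (i, j); apply: veq_trans xa _.
exact: veq_trans (veq_mul (veq_refl V _) fxb) (veq_sym (veq_assoc V _ _ _)).
Qed.

(* [infinite_index_gen V P] is [~ finite_index_gen P] by conversion. *)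
Definition finite_index_gen (k : nat) (P : 'I_k -> Prop) :=
  exists (n : nat) (r : 'I_n -> gword 'I_k), forall x, exists (i : 'I_n) (h : gword 'I_k),
    in_gen_subgroup V P h /\ veq V x (gmul (r i) h).

Lemma fin_cover_kill1_of_finite_index (k : nat) (j : 'I_k) :
  finite_index_gen (fun i => i <> j) -> fin_cover (gsubst (kill (pred1 j))).
Proof.
move=> [n [r cov]].
pose f := gsubst (kill (pred1 j)).
exists 'I_n, (fun i => gmul (r i) (ginv (f (r i)))) => x.
have [i [h [[h' [h'P hh']] xrh]]] := cov x; exists i.
have {}xrh : veq V x (gmul (r i) h') := veq_trans xrh (veq_mul (veq_refl V _) hh').
have fh' : f h' = h' by apply: gsubst_id_in h'P => i0 /eqP; rewrite /kill /= => /negbTE ->.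
have fx := veq_gsubst (kill (pred1 j)) xrh; rewrite /= -/f fh' in fx.
apply: veq_trans xrh (veq_sym _); apply: veq_trans (veq_assoc V _ _ _) _.
apply: veq_mul (veq_refl V _) _.
exact: veq_trans (veq_mul (veq_refl V _) fx) (veq_mulKg _ _).
Qed.

Lemma fin_cover_gsubst1_finite (X : Type) :
  fin_cover (gsubst (fun _ => gone : gword X)) ->
  exists (n : nat) (r : 'I_n -> gword X), forall x, exists i : 'I_n, veq V x (r i).
Proof.
move=> [I [a cov]]; exists #|I|, (a \o enum_val) => x.
have [i xa] := cov x; exists (enum_rank i); rewrite /= enum_rankK.
exact: veq_trans xa (veq_trans (veq_mul (veq_refl V _) (veq_gsubst1 _ x)) (veq_mul1r V _)).
Qed.

(* Conjugating by the renaming [tperm j k] of the generators moves the retraction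
   killing [j] to the one killing [k]. *)
Lemma fin_cover_kill1_tperm (X : finType) (j k : X) :
  fin_cover (gsubst (kill (pred1 j))) -> fin_cover (gsubst (kill (pred1 k))).
Proof.
move=> [I [a cov]]; pose s (i : X) := gvar (tperm j k i).
have ssK w : gsubst s (gsubst s w) = w.
  by rewrite gsubst_comp -[RHS]gsubst_var; apply: eq_gsubst => i; rewrite /s /= tpermK.
have s_kill w : gsubst s (gsubst (kill (pred1 j)) (gsubst s w)) = gsubst (kill (pred1 k)) w.
  rewrite !gsubst_comp; apply: eq_gsubst => i; rewrite /s /kill /=.
  have -> : (tperm j k i == j) = (i == k).
    by rewrite -[X in _ == X](tpermR j k) (inj_eq perm_inj).
  by case: (i == k); rewrite //= tpermK.
exists I, (gsubst s \o a) => x.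
have [i sxa] := cov (gsubst s x); exists i.
by have := veq_gsubst s sxa; rewrite /= ssK s_kill.
Qed.

Lemma fin_cover_kill_all (X : finType) :
  (forall k : X, fin_cover (gsubst (kill (pred1 k)))) ->
  fin_cover (gsubst (fun _ => gone : gword X)).
Proof.
move=> cov1; suff: forall s : seq X, fin_cover (gsubst (kill [pred i | i \in s])).
  move=> /(_ (enum X)) [I [a cov]]; exists I, a => x.
  by rewrite -(@eq_gsubst _ _ (kill [pred i | i \in enum X])) // => i; rewrite /kill /= mem_enum.
elim=> [|k s cov_s].
  exists unit, (fun _ => gone) => x; exists tt.
  rewrite (@eq_gsubst _ _ _ (@gvar X)) ?gsubst_var; first exact: veq_sym (veq_mul1l V x).
  by move=> i; rewrite /kill /=.
have [I [a cov]] := fin_cover_comp (cov1 k) cov_s.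
exists I, a => x; rewrite (@eq_gsubst _ _ _ (kill (predU (pred1 k) [pred i | i \in s]))).
  by rewrite -gsubst_killU; apply: cov.
by move=> i; rewrite /kill /= inE.
Qed.

End Variety.

Theorem mainTheorem8 (V : variety) (m : nat) :
  relfree_infinite V m.+1 ->
  forall j : 'I_m.+1,
    infinite_index_gen V (fun i : 'I_m.+1 => i <> j).
Proof.
move=> infF j fin_index; apply: infF.
apply/fin_cover_gsubst1_finite/fin_cover_kill_all => k.
exact/(fin_cover_kill1_tperm (j := j))/fin_cover_kill1_of_finite_index.
Qed.
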